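(* Assume (A1)–(A3), the latent index model (LI) below, and that $\Gamma^{Wald}$ is positive definite. Let $w^P$ be the MTE weight function of a policy that changes the propensity score distribution. Then there exists a unique $$\omega^{PRTE}=\arg\min_{\omega\in\mathcal S}\omega'\Gamma^{Wald}\omega,\qquad\text{where}\quad\mathcal S=\arg\min_{\omega\in\Delta^{L-1}}\int_0^1\bigl[\bar h(u;\omega)-w^P(u)\bigr]^2du.$$
   Context: Observe i.i.d. $(Y_i,D_i,\mathbf Z_i)$, $Y_i\in\mathbb R$, $D_i\in\{0,1\}$, $\mathbf Z_i=(Z_{1i},\dots,Z_{Li})'\in\{0,1\}^L$, $L\ge2$; potential outcomes $Y_i(0),Y_i(1)$, compliance type $D_i(\cdot):\{0,1\}^L\to\{0,1\}$, $D_i=D_i(\mathbf Z_i)$, $Y_i=D_iY_i(1)+(1-D_i)Y_i(0)$. $p_\ell=P(Z_{\ell i}=1)$, $\pi_\ell,\rho_\ell$ the differences of $\mathbb E[D_i\mid Z_{\ell i}=z]$, $\mathbb E[Y_i\mid Z_{\ell i}=z]$ between $z=1,0$, $\mathrm{Wald}_\ell=\rho_\ell/\pi_\ell$, $\gamma_\ell=\mathrm{Cov}(D_i,Z_{\ell i})$, $\Sigma_Z=\mathrm{Var}(\mathbf Z_i)$. $\Gamma^{Wald}_{\ell k}=\mathbb E[\tilde\epsilon_{i,\ell}\tilde\epsilon_{i,k}(Z_{\ell i}-p_\ell)(Z_{ki}-p_k)]/(\gamma_\ell\gamma_k)$, $\tilde\epsilon_{i,\ell}=Y_i-\mathrm{Wald}_\ell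 D_i-(\mathbb E[Y_i]-\mathrm{Wald}_\ell\mathbb E[D_i])$. $\Delta^{L-1}$ is the probability simplex in $\mathbb R^L$. (LI): $D_i=\mathbf 1\{V(\mathbf Z_i)\ge U_i\}$, $U_i\sim\mathrm{Uniform}(0,1)$ conditional on potential outcomes; $p(z)=V(z)=P(D_i=1\mid\mathbf Z_i=z)$; $h_\ell(u)=\dfrac{P(p(\mathbf Z_i)\ge u\mid Z_{\ell i}=1)-P(p(\mathbf Z_i)\ge u\mid Z_{\ell i}=0)}{\mathbb E[p(\mathbf Z_i)\mid Z_{\ell i}=1]-\mathbb E[p(\mathbf Z_i)\mid Z_{\ell i}=0]}$, $\bar h(u;\omega)=\sum_\ell\omega_\ell h_\ell(u)$. A policy moving the instrument distribution from $F_0$ to $F_1$ has weight $w^P(u)=(F_0(u)-F_1(u))/\int_0^1(F_0(s)-F_1(s))ds$, where $F_j(u)=P(p(\mathbf Z_i)\ge u\mid\text{policy }j)$ (denominator assumed nonzero). Assumptions: (A1) $(Y_i(0),Y_i(1),D_i(\cdot))$ independent of $\mathbf Z_i$. (A2) $D_i(z)$ nondecreasing in each coordinate for every $i$. (A3) $p_\ell>0$, $\pi_\ell>0$ for all $\ell$; $\Sigma_Z$ positive definite. *)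

From HB Require Import structures.
From mathcomp Require Import all_boot all_order all_algebra.
From mathcomp Require Import all_classical all_reals all_analysis.
Set Implicit Arguments. Unset Strict Implicit. Unset Printing Implicit Defensive.
Import Order.TTheory GRing.Theory Num.Theory.
Import numFieldNormedType.Exports.
Local Open Scope classical_set_scope.
Local Open Scope ring_scope.

Definition bvec (L : nat) := {ffun 'I_L -> bool}.
(* compliance types D_i(.) : {0,1}^L -> {0,1} *)
Definition ctype (L : nat) := {ffun bvec L -> bool}.

Section Model.
Context {R : realType} {d : measure_display} {T : measurableType d}
  (P : probability T R) {L : nat}.
Context (Z : T -> bvec L) (Dt : T -> ctype L) (Y0 Y1 : T -> R).

Definition Ex (X : T -> R) : R := fine ('E_P[X])%E.
Definition Pr (A : set T) : R := fine (P A).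
Definition Cov (X X' : T -> R) : R := fine (covariance P X X').
Definition condE (X : T -> R) (A : set T) : R :=
  Ex (fun w => X w * \1_A w) / Pr A.
Definition condPr (A B : set T) : R := Pr (A `&` B) / Pr B.

Definition Dobs (w : T) : R := (Dt w (Z w))%:R.
Definition Yobs (w : T) : R := Dobs w * Y1 w + (1 - Dobs w) * Y0 w.
Definition Zr (l : 'I_L) (w : T) : R := (Z w l)%:R.
Definition Zeq (l : 'I_L) (b : bool) : set T := [set w | Z w l = b].

Definition p_l (l : 'I_L) : R := Pr (Zeq l true).
Definition pi_l (l : 'I_L) : R := condE Dobs (Zeq l true) - condE Dobs (Zeq l false).
Definition rho_l (l : 'I_L) : R := condE Yobs (Zeq l true) - condE Yobs (Zeq l false).
Definition Wald (l : 'I_L) : R := rho_l l / pi_l l.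
Definition gamma_l (l : 'I_L) : R := Cov Dobs (Zr l).
Definition SigmaZ : 'M[R]_L := \matrix_(l, k) Cov (Zr l) (Zr k).

Definition eps_t (l : 'I_L) (w : T) : R :=
  Yobs w - Wald l * Dobs w - (Ex Yobs - Wald l * Ex Dobs).

Definition GammaWald : 'M[R]_L := \matrix_(l, k)
  (Ex (fun w => eps_t l w * eps_t k w * (Zr l w - p_l l) * (Zr k w - p_l k))
   / (gamma_l l * gamma_l k)).

(* MTE weights of the Wald estimands under (LI), with p(z) = V(z) *)
Definition h_l (V : bvec L -> R) (l : 'I_L) (u : R) : R :=
  (condPr [set w | u <= V (Z w)] (Zeq l true)
   - condPr [set w | u <= V (Z w)] (Zeq l false))
  / (condE (fun w => V (Z w)) (Zeq l true) - condE (fun w => V (Z w)) (Zeq l false)).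

Definition hbar (V : bvec L -> R) (om : 'cV[R]_L) (u : R) : R :=
  \sum_l om l 0 * h_l V l u.

End Model.

(* policy weights: F_j(u) = P(p(Z) >= u | policy j), where mu_j is the
   distribution of the propensity score under policy j *)
Definition Fpol {R : realType} (mu : probability (measurableTypeR R) R) (u : R) : R :=
  fine (mu `[u, +oo[%classic).

Definition wP {R : realType} (mu0 mu1 : probability (measurableTypeR R) R) (u : R) : R :=
  (Fpol mu0 u - Fpol mu1 u) /
  (\int[@lebesgue_measure R]_(s in `[0%R, 1%R]) (Fpol mu0 s - Fpol mu1 s)).

Definition simplex {R : realType} (L : nat) : set 'cV[R]_L :=
  [set om | (forall i, 0 <= om i 0) /\ \sum_i om i 0 = 1].

Definition quadform {R : realType} {L : nat} (M : 'M[R]_L) (om : 'cV[R]_L) : R :=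
  (om^T *m M *m om) 0 0.

Definition posdef {R : realType} {L : nat} (M : 'M[R]_L) : Prop :=
  forall x : 'cV[R]_L, x != 0 -> 0 < quadform M x.

Definition argmin_on {R : realType} {X : Type} (A : set X) (f : X -> \bar R) : set X :=
  [set x | A x /\ forall y, A y -> (f x <= f y)%E].

Definition fit_obj {R : realType} {L : nat} (hb : 'cV[R]_L -> R -> R) (w : R -> R)
  (om : 'cV[R]_L) : \bar R :=
  (\int[@lebesgue_measure R]_(u in `[0%R, 1%R]) ((hb om u - w u) ^+ 2)%:E)%E.

Section Assumptions.
Context {R : realType} {d : measure_display} {T : measurableType d}
  (P : probability T R) {L : nat}.
Context (Z : T -> bvec L) (Dt : T -> ctype L) (Y0 Y1 : T -> R).

Definition regular : Prop :=
  measurable_fun setT Y0 /\ measurable_fun setT Y1 /\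
  (forall z, measurable (Z @^-1` [set z])) /\
  (forall t, measurable (Dt @^-1` [set t])) /\
  P.-integrable setT (fun w => (Y0 w ^+ 2)%:E) /\
  P.-integrable setT (fun w => (Y1 w ^+ 2)%:E).

(* (A1): (Y(0), Y(1), D(.)) independent of Z (product rule on a generating
   pi-system of the joint sigma-algebra) *)
Definition A1 : Prop :=
  forall (A B : set R), measurable A -> measurable B ->
  forall (t : ctype L) (z : bvec L),
    P (Y0 @^-1` A `&` Y1 @^-1` B `&` Dt @^-1` [set t] `&` Z @^-1` [set z]) =
    (P (Y0 @^-1` A `&` Y1 @^-1` B `&` Dt @^-1` [set t]) * P (Z @^-1` [set z]))%E.

Definition A2 : Prop :=
  forall w (z z' : bvec L), (forall l, z l ==> z' l) -> Dt w z ==> Dt w z'.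

Definition A3 : Prop :=
  (forall l, 0 < p_l P Z l) /\ (forall l, 0 < pi_l P Z Dt l) /\ posdef (SigmaZ P Z).

(* (LI): D_i(z) = 1{V(z) >= U_i}, U_i ~ Uniform(0,1) conditional on the
   potential outcomes, and p(z) = V(z) in [0,1] *)
Definition LI (U : T -> R) (V : bvec L -> R) : Prop :=
  measurable_fun setT U /\
  (forall w z, Dt w z = (U w <= V z)) /\
  (forall (A B : set R), measurable A -> measurable B ->
   forall a b : R, 0 <= a -> a <= b -> b <= 1 ->
     P (Y0 @^-1` A `&` Y1 @^-1` B `&` U @^-1` `]a, b]%classic) =
     ((b - a)%:E * P (Y0 @^-1` A `&` Y1 @^-1` B))%E) /\
  (forall z, 0 <= V z <= 1).

End Assumptions.

Definition policy_ok {R : realType} (mu0 mu1 : probability (measurableTypeR R) R) : Prop :=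
  mu0 `[0%R, 1%R]%classic = 1%E /\ mu1 `[0%R, 1%R]%classic = 1%E /\
  (\int[@lebesgue_measure R]_(s in `[0%R, 1%R]) (Fpol mu0 s - Fpol mu1 s)) != 0.

From HB Require Import structures.
From mathcomp Require Import all_boot all_order all_algebra.
From mathcomp Require Import all_classical all_reals all_analysis.
From mathcomp Require Import measurable_realfun.
From mathcomp Require Import ring lra.

Set Implicit Arguments.
Unset Strict Implicit.
Unset Printing Implicit Defensive.
Import Order.TTheory GRing.Theory Num.Theory.
Import numFieldNormedType.Exports.
Local Open Scope classical_set_scope.
Local Open Scope ring_scope.

(** On the simplex the weights sum to one, so [hbar(.; om) - w^P] is the
    combination [sum_l om_l (h_l - w^P)] and the first-stage objective is the
    quadratic form of the Gram matrix of the [h_l - w^P] in [L^2[0,1]]. This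
    form is positive semidefinite, so its minimisers over the simplex form a
    nonempty compact convex set [S]. On [S] the positive definite form
    [om' Gamma^Wald om] attains its minimum, and at only one point: for two
    minimisers, the parallelogram identity makes their midpoint strictly
    better. *)

Section bounded_measurable.
Context {R : realType}.

Definition bounded_measurable (f : R -> R) : Prop :=
  measurable_fun setT f /\ exists K : R, forall u, `|f u| <= K.

Lemma bounded_measurable_cst (c : R) : bounded_measurable (fun=> c).
Proof. by split; [exact: measurable_cst | exists `|c|]. Qed.

Lemma bounded_measurableD (f g : R -> R) :
  bounded_measurable f -> bounded_measurable g -> bounded_measurable (f \+ g).
Proof.
move=> [mf [K fK]] [mg [M gM]]; split; first exact: measurable_funD.
by exists (K + M) => u; apply: le_trans (ler_normD _ _) (lerD _ _).
Qed.

Lemma bounded_measurableN (f : R -> R) :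
  bounded_measurable f -> bounded_measurable (\- f).
Proof.
move=> [mf [K fK]]; split; first exact: measurableT_comp.
by exists K => u; rewrite normrN.
Qed.

Lemma bounded_measurableB (f g : R -> R) :
  bounded_measurable f -> bounded_measurable g -> bounded_measurable (f \- g).
Proof. by move=> bf /bounded_measurableN; exact: bounded_measurableD. Qed.

Lemma bounded_measurableM (f g : R -> R) :
  bounded_measurable f -> bounded_measurable g -> bounded_measurable (f \* g).
Proof.
move=> [mf [K fK]] [mg [M gM]]; split; first exact: measurable_funM.
by exists (K * M) => u; rewrite normrM; apply: ler_pM.
Qed.

Lemma nonincreasing_unit_bounded_measurable (f : R -> R) :
  {homo f : x y / x <= y >-> y <= x} -> (forall u, 0 <= f u <= 1) ->
  bounded_measurable f.
Proof.
move=> f_noninc f01; split; first exact: nonincreasing_measurable.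
by exists 1 => u; have /andP[f0 f1] := f01 u; rewrite ger0_norm.
Qed.

Lemma bounded_measurable_integrable (f : R -> R) : bounded_measurable f ->
  (@lebesgue_measure R).-integrable `[0%R, 1%R] (EFin \o f).
Proof.
move=> [mf [K fK]]; apply: measurable_bounded_integrable => //.
- by rewrite /= lebesgue_measure_itv/= lte01 -EFinB ltry.
- exact: measurable_funS mf.
- exists K; split; first exact: num_real.
  by move=> M KM x _; apply: le_trans (fK x) (ltW KM).
Qed.

End bounded_measurable.

Lemma measurable_preimage_finType {d} {T : measurableType d} {X : finType}
    (Z : T -> X) :
  (forall z, measurable (Z @^-1` [set z])) -> forall A, measurable (Z @^-1` A).
Proof.
move=> mZ A; have -> : Z @^-1` A = \bigcup_(z in A) Z @^-1` [set z].
  by apply/seteqP; split => [w Aw | w [z Az /= ->]] //; exists (Z w).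
by apply: fin_bigcup_measurable => //; exact: finite_finset.
Qed.

Lemma fine_probability_ge0_le1 {d} {T : measurableType d} {R : realType}
    (P : probability T R) (A : set T) :
  measurable A -> 0 <= fine (P A) <= 1.
Proof.
move=> mA; rewrite fine_ge0 //=.
have : P A \is a fin_num by rewrite fin_num_measure.
by move: (probability_le1 P mA); case: (P A) => //= r; rewrite lee_fin.
Qed.

Lemma bounded_measurable_fine_probability {d} {T : measurableType d} {R : realType}
    (P : probability T R) (A : R -> set T) :
  (forall u, measurable (A u)) -> (forall u v, u <= v -> A v `<=` A u) ->
  bounded_measurable (fun u => fine (P (A u))).
Proof.
move=> mA A_noninc; apply: nonincreasing_unit_bounded_measurable => [u v uv|u].
- apply: fine_le; rewrite ?fin_num_measure//.
  by apply: le_measure; rewrite ?inE//; exact: A_noninc.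
- exact: fine_probability_ge0_le1.
Qed.

Section weight_functions.
Context {R : realType}.

Lemma h_l_bounded_measurable {d} {T : measurableType d} (P : probability T R)
    {L : nat} (Z : T -> bvec L) (V : bvec L -> R) (l : 'I_L) :
  (forall z, measurable (Z @^-1` [set z])) -> bounded_measurable (h_l P Z V l).
Proof.
move=> mZ; have mZA := measurable_preimage_finType mZ.
have survival b : bounded_measurable
    (fun u => fine (P ([set w | u <= V (Z w)] `&` Zeq Z l b))).
  apply: bounded_measurable_fine_probability => [u|u v uv w [/= vV Zw]].
    exact: measurableI (mZA [set z | u <= V z]) (mZA [set z | z l = b]).
  by split => //=; exact: le_trans vV.
rewrite /h_l /condPr /Pr.
apply: bounded_measurableM (bounded_measurable_cst _).
by apply: bounded_measurableB; apply: bounded_measurableM (bounded_measurable_cst _).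
Qed.

Lemma Fpol_bounded_measurable (mu : probability (measurableTypeR R) R) :
  bounded_measurable (Fpol mu).
Proof.
apply: bounded_measurable_fine_probability => // u v uv x /=.
by rewrite !in_itv/= !andbT; exact: le_trans.
Qed.

Lemma wP_bounded_measurable (mu0 mu1 : probability (measurableTypeR R) R) :
  bounded_measurable (wP mu0 mu1).
Proof.
apply: bounded_measurableM (bounded_measurable_cst _).
by apply: bounded_measurableB; exact: Fpol_bounded_measurable.
Qed.

End weight_functions.

Section quadratic_forms.
Context {R : realType} {L : nat}.
Implicit Types (M : 'M[R]_L) (x a b : 'cV[R]_L).

Lemma quadformE M x :
  quadform M x = \sum_(p : 'I_L * 'I_L) x p.1 0 * M p.1 p.2 * x p.2 0.
Proof.
rewrite /quadform mxE; under eq_bigr do rewrite mxE big_distrl.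
by rewrite exchange_big pair_big /=; apply: eq_bigr => p _; rewrite !mxE.
Qed.

Lemma quadform_midpoint M a b :
  4 * quadform M ((2 : R)^-1 *: (a + b)) =
  2 * quadform M a + 2 * quadform M b - quadform M (a - b).
Proof.
rewrite !quadformE !mulr_sumr -big_split -sumrB; apply: eq_bigr => p _.
by rewrite !mxE /=; field.
Qed.

Lemma continuous_quadform M : continuous (quadform M).
Proof.
have term p : continuous (fun x : 'cV[R]_L => x p.1 0 * M p.1 p.2 * x p.2 0).
  move=> x; apply: (@continuousM R _ (fun y : 'cV[R]_L => y p.1 0 * M p.1 p.2)).
    apply: (@continuousM R _ (fun y : 'cV[R]_L => y p.1 0)).
      exact: coord_continuous.
    exact: cst_continuous.
  exact: coord_continuous.
rewrite (_ : quadform M = fun x => \sum_(p : 'I_L * 'I_L) x p.1 0 * M p.1 p.2 * x p.2 0).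
  2: by apply: funext => x; rewrite quadformE.
by apply: continuous_big => //; exact: add_continuous.
Qed.

End quadratic_forms.

Section gram.
Context {R : realType} {L : nat} (e : 'I_L -> R -> R).
Hypothesis e_bounded : forall l, bounded_measurable (e l).

Definition gram : 'M[R]_L :=
  \matrix_(l, k) fine (\int[@lebesgue_measure R]_(u in `[0%R, 1%R]) (e l u * e k u)%:E).

Lemma integral_sqr_lincomb (x : 'cV[R]_L) :
  (\int[@lebesgue_measure R]_(u in `[0%R, 1%R]) ((\sum_l x l 0 * e l u) ^+ 2)%:E =
   (quadform gram x)%:E)%E.
Proof.
have int_ee (p : 'I_L * 'I_L) := bounded_measurable_integrable
  (bounded_measurableM (e_bounded p.1) (e_bounded p.2)).
have sqr_sum u : ((\sum_l x l 0 * e l u) ^+ 2)%:E =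
    (\sum_(p : 'I_L * 'I_L) (x p.1 0 * x p.2 0)%:E * (e p.1 u * e p.2 u)%:E)%E.
  rewrite expr2 mulr_suml; under eq_bigr do rewrite mulr_sumr.
  rewrite pair_big /= -sumEFin; apply: eq_bigr => p _.
  by rewrite -EFinM; congr (_%:E); ring.
under eq_integral => u _ do rewrite sqr_sum.
rewrite integral_sum //; last by move=> p; apply: integrableZl => //; exact: int_ee.
rewrite quadformE -sumEFin; apply: eq_bigr => p _.
rewrite integralZl //; last exact: int_ee.
rewrite mxE -[X in (_ * X)%E]fineK; last exact: integrable_fin_num (int_ee p).
by rewrite -EFinM; congr (_%:E); ring.
Qed.

Lemma quadform_gram_ge0 (x : 'cV[R]_L) : 0 <= quadform gram x.
Proof.
rewrite -lee_fin -integral_sqr_lincomb; apply: integral_ge0 => u _.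
by rewrite lee_fin sqr_ge0.
Qed.

End gram.

Lemma fit_obj_quadform {R : realType} {L : nat} (h : 'I_L -> R -> R) (w : R -> R)
    (om : 'cV[R]_L) :
  (forall l, bounded_measurable (h l)) -> bounded_measurable w ->
  \sum_l om l 0 = 1 ->
  fit_obj (fun om u => \sum_l om l 0 * h l u) w om =
  (quadform (gram (fun l u => h l u - w u)) om)%:E.
Proof.
move=> h_bounded w_bounded om1.
rewrite /fit_obj -integral_sqr_lincomb => [|l]; last exact: bounded_measurableB.
apply: eq_integral => u _; congr ((_ ^+ 2)%:E).
under [RHS]eq_bigr do rewrite mulrBr.
by rewrite sumrB -mulr_suml om1 mul1r.
Qed.

Section argmin.
Context {R : realType} {T : topologicalType}.
Implicit Types (A : set T) (f : T -> R).

Lemma eq_argmin_on A (F G : T -> \bar R) :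
  (forall x, A x -> F x = G x) -> argmin_on A F = argmin_on A G.
Proof.
move=> FG; apply/seteqP; split=> x [Ax xmin]; split=> // y Ay.
  by rewrite -!FG //; exact: xmin.
by rewrite !FG //; exact: xmin.
Qed.

Lemma compact_argmin_on A f : compact A -> continuous f ->
  compact (argmin_on A (fun x => (f x)%:E)).
Proof.
move=> A_compact f_cont.
have -> : argmin_on A (fun x => (f x)%:E) =
    A `&` \bigcap_(y in A) f @^-1` [set r | r <= f y].
  by apply/seteqP; split=> x [Ax xmin]; split=> // y Ay; have := xmin y Ay.
apply: compact_closedI => //; apply: closed_bigI => y _.
by apply: preimage_closed => [x _|]; [exact: f_cont | exact: closed_le].
Qed.

Lemma argmin_on_nonempty A f : A !=set0 -> compact A -> continuous f ->
  argmin_on A (fun x => (f x)%:E) !=set0.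
Proof.
move=> A0 A_compact f_cont.
have [c /set_mem Ac cmin] :=
  compact_EVT_min A0 A_compact (continuous_subspaceT f_cont).
by exists c; split=> // y Ay; rewrite lee_fin; apply: cmin; exact: mem_set.
Qed.

End argmin.

Definition midpoint_closed {R : numFieldType} {V : lmodType R} (A : set V) : Prop :=
  forall a b, A a -> A b -> A ((2 : R)^-1 *: (a + b)).

Section argmin_quadform.
Context {R : realType} {L : nat} (A : set 'cV[R]_L).
Hypothesis A_midpoint : midpoint_closed A.

Lemma argmin_quadform_midpoint_closed (M : 'M[R]_L) :
  (forall x, 0 <= quadform M x) ->
  midpoint_closed (argmin_on A (fun x => (quadform M x)%:E)).
Proof.
move=> M_ge0 a b [Aa amin] [Ab bmin]; split=> [|y Ay]; first exact: A_midpoint.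
have := amin y Ay; have := bmin _ Aa; have := amin _ Ab; rewrite !lee_fin.
by have := quadform_midpoint M a b; have := M_ge0 (a - b); lra.
Qed.

Lemma argmin_quadform_posdef_uniq (M : 'M[R]_L) a b :
  posdef M -> argmin_on A (fun x => (quadform M x)%:E) a ->
  argmin_on A (fun x => (quadform M x)%:E) b -> a = b.
Proof.
move=> M_pd [Aa amin] [Ab bmin]; apply/eqP; rewrite -subr_eq0.
apply/negPn/negP => /M_pd ab_pos.
have := amin _ (A_midpoint Aa Ab); have := amin _ Ab; have := bmin _ Aa.
by rewrite !lee_fin; have := quadform_midpoint M a b; lra.
Qed.

End argmin_quadform.

Lemma trmx_continuous {K : numFieldType} m n :
  continuous (fun M : 'M[K]_(m, n) => M^T).
Proof.
move=> M s /= /(nbhs_ballP (M^T)) [e e0 es].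
apply/nbhs_ballP; exists e => //= N [_ MN].
by apply: es; split=> // i j; rewrite !mxE.
Qed.

Lemma cV_compact {R : realType} n (A : 'I_n -> set R) :
  (forall i, compact (A i)) -> compact [set v : 'cV[R]_n | forall i, A i (v i 0)].
Proof.
move=> A_compact.
have -> : [set v : 'cV[R]_n | forall i, A i (v i 0)] =
    trmx @` [set v : 'rV[R]_n | forall i, A i (v ord0 i)].
  apply/seteqP; split=> [v Av|_ [v Av <-] i]; last by rewrite mxE.
  by exists v^T; [move=> i; rewrite mxE | rewrite trmxK].
apply: continuous_compact; last exact: rV_compact.
exact/continuous_subspaceT/trmx_continuous.
Qed.

Section simplex.
Context {R : realType} {L : nat}.

Lemma simplex_midpoint_closed : midpoint_closed (@simplex R L).
Proof.
move=> a b [a_ge0 a1] [b_ge0 b1]; split=> [i|].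
  by rewrite !mxE mulr_ge0 ?addr_ge0 // invr_ge0 ler0n.
under eq_bigr do rewrite !mxE.
by rewrite -mulr_sumr big_split /= a1 b1 mulVf // pnatr_eq0.
Qed.

Lemma simplex_nonempty : (0 < L)%N -> @simplex R L !=set0.
Proof.
move=> L_gt0; pose i0 := Ordinal L_gt0.
exists (\col_i (i == i0)%:R); split=> [i|]; first by rewrite mxE ler0n.
under eq_bigr do rewrite mxE.
by rewrite (bigD1 i0) //= big1 ?addr0 // => i /negbTE ->.
Qed.

Lemma compact_simplex : compact (@simplex R L).
Proof.
pose box := [set v : 'cV[R]_L | forall i, `[0%R, 1%R]%classic (v i 0)].
apply: (@subclosed_compact _ _ box).
- have -> : @simplex R L =
      \bigcap_i [set om | 0 <= om i 0] `&` [set om | \sum_i om i 0 = 1].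
    apply/seteqP; split=> om [om_ge0 om1]; split=> // i.
      by move=> _; exact: om_ge0.
    exact: om_ge0 i I.
  apply: closedI.
    apply: closed_bigI => i _.
    apply: (@preimage_closed _ _ (fun om : 'cV[R]_L => om i 0) [set r | 0 <= r]).
      by move=> om _; exact: coord_continuous.
    exact: closed_ge.
  apply: (@preimage_closed _ _ (fun om : 'cV[R]_L => \sum_i om i 0) [set r | r = 1]).
    move=> om _; apply: continuous_big => [|i _]; first exact: add_continuous.
    exact: coord_continuous.
  exact: closed_eq.
- exact: (@cV_compact R L (fun=> `[0%R, 1%R]%classic) (fun=> @segment_compact R 0 1)).
move=> om [om_ge0 om1] i; rewrite /= in_itv /= om_ge0 -om1.
by rewrite (bigD1 i) //= lerDl sumr_ge0.
Qed.

End simplex.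

Theorem proposition15 (R : realType) (d : measure_display) (T : measurableType d)
  (P : probability T R) (L : nat) (Z : T -> bvec L) (Dt : T -> ctype L)
  (Y0 Y1 U : T -> R) (V : bvec L -> R)
  (mu0 mu1 : probability (measurableTypeR R) R) :
  (2 <= L)%N ->
  regular P Z Dt Y0 Y1 ->
  A1 P Z Dt Y0 Y1 -> A2 Dt -> A3 P Z Dt ->
  LI P Dt Y0 Y1 U V ->
  posdef (GammaWald P Z Dt Y0 Y1) ->
  policy_ok mu0 mu1 ->
  let S := argmin_on (@simplex R L) (fit_obj (hbar P Z V) (wP mu0 mu1)) in
  exists! om : 'cV[R]_L,
    argmin_on S (fun x => (quadform (GammaWald P Z Dt Y0 Y1) x)%:E) om.
Proof.
move=> L_ge2 [_ [_ [Z_measurable _]]] _ _ _ _ Gamma_pd _ S.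
pose G := gram (fun l u => h_l P Z V l u - wP mu0 mu1 u).
have h_bounded l := h_l_bounded_measurable P V l Z_measurable.
have w_bounded := wP_bounded_measurable mu0 mu1.
have SE : S = argmin_on (@simplex R L) (fun om => (quadform G om)%:E).
  by apply: eq_argmin_on => om [_ om1]; exact: fit_obj_quadform.
have G_ge0 x : 0 <= quadform G x.
  by apply: quadform_gram_ge0 => l; exact: bounded_measurableB.
have S_midpoint : midpoint_closed S.
  rewrite SE; apply: argmin_quadform_midpoint_closed => //.
  exact: simplex_midpoint_closed.
have S_compact : compact S.
  by rewrite SE; apply: compact_argmin_on compact_simplex _; exact: continuous_quadform.
have S_nonempty : S !=set0.
  have simplex0 : @simplex R L !=set0 by exact/simplex_nonempty/ltnW.
  by rewrite SE; exact: argmin_on_nonempty simplex0 compact_simplex (@continuous_quadform R L G).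
have [om om_min] := argmin_on_nonempty S_nonempty S_compact
  (@continuous_quadform R L (GammaWald P Z Dt Y0 Y1)).
exists om; split=> // om' om'_min.
exact: (argmin_quadform_posdef_uniq S_midpoint Gamma_pd om_min om'_min).
Qed.
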